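(* Let $G$ be a bounded-length, turn-based Dec-POMDP. Applying OBL with temperature $0$ to any constant policy $\pi_0(a\mid\tau^i)=f(a)$, or more generally to any policy $\pi_0$ that conditions only on the public state, yields an optimal grounded policy.
   Context: A Dec-POMDP $G$ has states $s$, actions $a$, per-player observation functions $\Omega^i(s)$ (observations $o^i_t$), transition function $\mathcal{T}$, and common reward $R(s,a)$; it is turn-based (only one player acts at each state) and reaches a terminal state after at most $t_{max}$ steps. The AOH of player $i$ at time $t$ is $\tau^i_t=(\Omega^i(s_1),a_1,\dots,a_{t-1},\Omega^i(s_t))$; policies map AOHs to action distributions. $V^{\pi}(\tau)$ is the expected future return when all players play $\pi$ from trajectory $\tau$. The belief induced by $\pi_0$ is $\mathcal{B}_{\pi_0}(\tau\mid\tau^i)=P(\tau\mid\tau^i,\pi_0)$, and $$Q^{\pi_0\to\pi_1}(a\mid\tau^i_t)=\sum_{\tau_t}\mathcal{B}_{\pi_0}(\tau_t\mid\tau^i_t)\Big[R(s_t,a)+\sum_{\tau_{t+1}}\mathcal{T}(\tau_{t+1}\mid\tau_t,a)V^{\pi_1}(\tau_{t+1})\Big].$$ OBL at temperature $0$ from $\pi_0$ produces a policy $\pi_1$ with $\pi_1(\tau^i)\in\arg\max_a Q^{\pi_0\to\pi_1}(a\mid\tau^i)$ at every AOH of an acting player. The grounded belief conditions only on observations, not on partner actions: $$\mathcal{B}_G(\tau\mid\tau^i)=\frac{P(\tau)\prod_t P(o^i_t\mid\tau)}{\sum_{\tau'}P(\tau')\prod_t P(o^i_t\mid\tau')}.$$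 An optimal grounded policy $\pi_G$ plays, at each AOH $\tau^i$, an action maximizing expected return assuming the trajectory at $\tau^i$ is distributed according to $\mathcal{B}_G(\cdot\mid\tau^i)$ and that $\pi_G$ is played by all players thereafter. *)

From HB Require Import structures.
From mathcomp Require Import all_boot all_order all_algebra.
Set Implicit Arguments. Unset Strict Implicit. Unset Printing Implicit Defensive.
Import Order.TTheory GRing.Theory Num.Theory.
Local Open Scope ring_scope.

Section DecPOMDP.
Variables (R : realFieldType) (N S A O : finType).

(* A turn-based Dec-POMDP: players N, states S, actions A, observations O.
   obs i s = Omega^i(s) (deterministic observation), turn s = the unique
   player acting at s, terminal states, horizon bound tmax. *)
Record game := Game {
  init : S -> R;
  trans : S -> A -> S -> R;
  rew : S -> A -> R;
  obs : N -> S -> O;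
  turn : S -> N;
  terminal : S -> bool;
  tmax : nat }.

(* trajectory tau_t = (s_1,a_1,...,s_{t-1},a_{t-1}, s_t) : (history, current state) *)
Definition traj := (seq (S * A) * S)%type.
(* AOH tau^i_t = (o_1,a_1,...,o_{t-1},a_{t-1}, o_t) *)
Definition aoh := (seq (O * A) * O)%type.
Definition policy := N -> aoh -> A -> R.

Variable G : game.

Definition aoh_of (i : N) (tau : traj) : aoh :=
  ([seq (obs G i p.1, p.2) | p <- tau.1], obs G i tau.2).

Definition first_state (tau : traj) : S := head tau.2 [seq p.1 | p <- tau.1].

(* the list of steps of a trajectory: (prefix trajectory, action taken, next state) *)
Fixpoint steps (acc : seq (S * A)) (h : seq (S * A)) (cur : S)
    : seq (traj * A * S) :=
  match h with
  | [::] => [::]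
  | (s, a) :: h' =>
      ((acc, s), a, head cur [seq p.1 | p <- h'])
        :: steps (rcons acc (s, a)) h' cur
  end.

Definition traj_steps (tau : traj) := steps [::] tau.1 tau.2.

(* environment probability P(tau) (no action-likelihood factors);
   the game stops at terminal states *)
Definition envP (tau : traj) : R :=
  init G (first_state tau) *
  \prod_(x <- traj_steps tau)
     (if terminal G x.1.1.2 then 0 else trans G x.1.1.2 x.1.2 x.2).

Definition polP (pi : policy) (tau : traj) : R :=
  \prod_(x <- traj_steps tau)
     pi (turn G x.1.1.2) (aoh_of (turn G x.1.1.2) x.1.1) x.1.2.

Definition jointP (pi : policy) (tau : traj) : R := envP tau * polP pi tau.

Definition extend (tau : traj) (a : A) (s' : S) : traj := (rcons tau.1 (tau.2, a), s').

Fixpoint Vfuel (pi : policy) (n : nat) (tau : traj) : R :=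
  match n with
  | 0 => 0
  | n'.+1 =>
      if terminal G tau.2 then 0 else
      let j := turn G tau.2 in
      \sum_a pi j (aoh_of j tau) a *
        (rew G tau.2 a + \sum_s' trans G tau.2 a s' * Vfuel pi n' (extend tau a s'))
  end.

(* the game lasts at most tmax steps, so tmax - t remaining steps suffice *)
Definition V (pi : policy) (tau : traj) : R := Vfuel pi (tmax G - size tau.1) tau.

Definition cont (pi : policy) (tau : traj) (a : A) : R :=
  rew G tau.2 a + \sum_s' trans G tau.2 a s' * V pi (extend tau a s').

Definition traj_of (k : nat) (x : (k.-tuple (S * A) * S)%type) : traj := (tval x.1, x.2).

Definition cond_belief (w : traj -> R) (i : N) (h : aoh) (tau : traj) : R :=
  (aoh_of i tau == h)%:R * w tau /
  \sum_(x : ((size h.1).-tuple (S * A) * S)%type)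
     (aoh_of i (traj_of x) == h)%:R * w (traj_of x).

Definition belief_pi (pi0 : policy) := cond_belief (jointP pi0).
(* grounded belief B_G: conditions on the AOH without partner-action likelihoods *)
Definition belief_G := cond_belief envP.

Definition Q_with (B : traj -> R) (pi : policy) (h : aoh) (a : A) : R :=
  \sum_(x : ((size h.1).-tuple (S * A) * S)%type)
     B (traj_of x) * cont pi (traj_of x) a.

Definition Q_obl (pi0 pi1 : policy) (i : N) (h : aoh) (a : A) : R :=
  Q_with (belief_pi pi0 i h) pi1 h a.

Definition Q_grounded (piG : policy) (i : N) (h : aoh) (a : A) : R :=
  Q_with (belief_G i h) piG h a.

Definition is_policy (pi : policy) : Prop :=
  forall i h, (forall a, 0 <= pi i h a) /\ \sum_a pi i h a = 1.

Definition in_argmax (q : A -> R) (p : A -> R) : Prop :=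
  forall a, 0 < p a -> forall b, q b <= q a.

Definition acting (i : N) (h : aoh) : Prop :=
  exists tau : traj, aoh_of i tau = h /\ turn G tau.2 = i /\ ~~ terminal G tau.2.

Definition OBL0 (pi0 pi1 : policy) : Prop :=
  is_policy pi1 /\
  forall i h, acting i h -> in_argmax (Q_obl pi0 pi1 i h) (pi1 i h).

Definition optimal_grounded (piG : policy) : Prop :=
  is_policy piG /\
  forall i h, acting i h -> in_argmax (Q_grounded piG i h) (piG i h).

Definition wf_game : Prop :=
  [/\ (forall s, 0 <= init G s), \sum_s init G s = 1,
      (forall s a s', 0 <= trans G s a s'),
      (forall s a, \sum_s' trans G s a s' = 1) &
      (forall tau : traj, size tau.1 = tmax G -> envP tau != 0 -> terminal G tau.2)].

Definition full_support (pi : policy) : Prop := forall i h a, 0 < pi i h a.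

(* public information: a public observation function pub determined by every
   player's private observation (common knowledge) *)
Definition public_obs (P : finType) (pub : S -> P) : Prop :=
  forall i, exists g : O -> P, forall s, pub s = g (obs G i s).

Definition pub_of (P : finType) (pub : S -> P) (tau : traj) : seq (P * A) * P :=
  ([seq (pub p.1, p.2) | p <- tau.1], pub tau.2).

Definition public_policy (P : finType) (pub : S -> P) (pi : policy) : Prop :=
  exists F : seq (P * A) * P -> A -> R,
    forall j (tau : traj), pi j (aoh_of j tau) = F (pub_of pub tau).

End DecPOMDP.

From HB Require Import structures.
From mathcomp Require Import all_boot all_order all_algebra.
Set Implicit Arguments.
Unset Strict Implicit.
Unset Printing Implicit Defensive.
Import Order.TTheory GRing.Theory Num.Theory.
Local Open Scope ring_scope.

(* A policy that sees only public information assigns to the actions of a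
   trajectory a likelihood that depends only on the public history, and every
   player can reconstruct the public history from their own action-observation
   history.  So on each fibre of player i's AOH this likelihood is a positive
   constant, which cancels in the Bayesian normalisation: the belief induced by
   pi0 is the grounded belief.  The OBL Q-values then coincide with the grounded
   Q-values, and a temperature-0 OBL policy is an optimal grounded policy.  A
   constant policy is the case of trivial public information. *)

Section PublicBelief.
Variables (R : realFieldType) (N S A O : finType) (G : game R N S A O).
Implicit Types (pi : policy R N A O) (tau : traj S A) (h : aoh A O) (i : N).

Lemma cond_belief_scale (w1 w2 : traj S A -> R) i h (c : R) :
  (forall tau, aoh_of G i tau = h -> w1 tau = c * w2 tau) ->
  (forall tau, aoh_of G i tau = h -> c != 0) ->
  cond_belief G w1 i h =1 cond_belief G w2 i h.
Proof.
move=> w1E c_neq0 tau; rewrite /cond_belief.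
have weightE t : (aoh_of G i t == h)%:R * w1 t
                 = c * ((aoh_of G i t == h)%:R * w2 t).
  by case: eqP => [/w1E ->|_]; rewrite ?mul1r // !mul0r mulr0.
rewrite weightE; under eq_bigr => x _ do rewrite weightE.
have [/c_neq0 c0|_] := eqVneq (aoh_of G i tau) h; last by rewrite !mul0r !mulr0 mul0r.
by rewrite -mulr_sumr invfM mulrACA mulfV // mul1r.
Qed.

Lemma belief_pi_grounded pi i (lik : aoh A O -> R) :
  (forall tau, polP G pi tau = lik (aoh_of G i tau)) ->
  (forall tau, 0 < polP G pi tau) ->
  forall h, belief_pi G pi i h =1 belief_G G i h.
Proof.
move=> likE polP_pos h; apply: (@cond_belief_scale _ _ i h (lik h)) => tau <-.
  by rewrite /jointP likE mulrC.
by rewrite -likE gt_eqF.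
Qed.

Lemma polP_gt0 pi : full_support pi -> forall tau, 0 < polP G pi tau.
Proof. by move=> pi_gt0 tau; apply: prodr_gt0 => x _; apply: pi_gt0. Qed.

Fixpoint pub_steps (P : finType) (acc ph : seq (P * A))
    : seq ((seq (P * A) * P) * A) :=
  if ph is (p, a) :: ph' then ((acc, p), a) :: pub_steps (rcons acc (p, a)) ph'
  else [::].

Lemma map_pub_of_steps (P : finType) (pub : S -> P) acc hist cur :
  [seq (pub_of pub x.1.1, x.1.2) | x <- steps acc hist cur] =
  pub_steps [seq (pub p.1, p.2) | p <- acc] [seq (pub p.1, p.2) | p <- hist].
Proof. by elim: hist acc => [|[s a] hist IH] acc //=; rewrite IH map_rcons. Qed.

Lemma polP_public (P : finType) (pub : S -> P) pi F :
  (forall j tau, pi j (aoh_of G j tau) = F (pub_of pub tau)) ->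
  forall tau, polP G pi tau = \prod_(y <- pub_steps [::] (pub_of pub tau).1) F y.1 y.2.
Proof.
move=> piE tau; rewrite /polP; under eq_bigr => x _ do rewrite piE.
by rewrite -(big_map (fun x => (pub_of pub x.1.1, x.1.2)) predT (fun y => F y.1 y.2))
           /traj_steps map_pub_of_steps.
Qed.

Lemma pub_of_aoh (P : finType) (pub : S -> P) i :
  public_obs G pub ->
  exists g : aoh A O -> seq (P * A) * P, forall tau, pub_of pub tau = g (aoh_of G i tau).
Proof.
case/(_ i) => g pubE.
exists (fun h => ([seq (g q.1, q.2) | q <- h.1], g h.2)) => tau.
by rewrite /pub_of /aoh_of /= -map_comp pubE; congr (_, _); apply: eq_map => q /=; rewrite pubE.
Qed.

Lemma public_belief_grounded (P : finType) (pub : S -> P) pi i :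
  public_obs G pub -> full_support pi -> public_policy G pub pi ->
  forall h, belief_pi G pi i h =1 belief_G G i h.
Proof.
move=> pubP pi_gt0 [F piE]; have [g pubE] := pub_of_aoh i pubP.
apply: (@belief_pi_grounded pi i (fun h => \prod_(y <- pub_steps [::] (g h).1) F y.1 y.2)).
  by move=> tau; rewrite (polP_public piE) pubE.
exact: polP_gt0.
Qed.

Lemma OBL0_optimal_grounded pi0 pi1 :
  (forall i h, belief_pi G pi0 i h =1 belief_G G i h) ->
  OBL0 G pi0 pi1 -> optimal_grounded G pi1.
Proof.
move=> beliefE [pi1P pi1_argmax]; split=> // i h h_acting a a_pos b.
have QE c : Q_obl G pi0 pi1 i h c = Q_grounded G pi1 i h c.
  by apply: eq_bigr => x _; rewrite /Q_obl beliefE.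
by rewrite -!QE; apply: pi1_argmax.
Qed.

End PublicBelief.

Theorem theorem4 (R : realFieldType) (N S A O : finType) (G : game R N S A O) :
  wf_game G ->
  (forall (f : A -> R) (pi0 pi1 : policy R N A O),
      (forall a, 0 < f a) -> \sum_a f a = 1 ->
      (forall i h, pi0 i h = f) ->
      OBL0 G pi0 pi1 -> optimal_grounded G pi1) /\
  (forall (P : finType) (pub : S -> P) (pi0 pi1 : policy R N A O),
      public_obs G pub ->
      is_policy pi0 -> full_support pi0 -> public_policy G pub pi0 ->
      OBL0 G pi0 pi1 -> optimal_grounded G pi1).
Proof.
move=> _; split=> [f pi0 pi1 f_gt0 _ pi0E | P pub pi0 pi1 pubP _ pi0_gt0 pi0_pub];
  apply: OBL0_optimal_grounded => i h.
- apply: (public_belief_grounded (pub := fun _ : S => tt)).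
  + by move=> j; exists (fun=> tt).
  + by move=> j h' a; rewrite pi0E.
  + by exists (fun=> f) => j tau; rewrite pi0E.
- exact: public_belief_grounded pubP pi0_gt0 pi0_pub h.
Qed.
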